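(* Let $X$ be a set of propositional variables, $\Sigma\subseteq\Pi X$ a set of classical models, and $\alpha,\beta$ formulas such that $var(\alpha)\cap var(\beta)=\emptyset$, $var(\beta)\cap R(\Sigma)=\emptyset$, and $\beta$ is not a tautology. If $\Sigma\subseteq M(\alpha\vee\beta)$, then $\Sigma\subseteq M(\alpha)$.
   Context: $\Pi X$ is the set of all assignments $X\to\{\mathrm{TRUE},\mathrm{FALSE}\}$; $M(\phi)$ is the set of models of $\phi$; $var(\phi)$ is the set of variables occurring in $\phi$. For $\Sigma\subseteq\Pi X$, a variable $p\in X$ is irrelevant for $\Sigma$ if changing the value of $p$ in any element of $\Sigma$ yields again an element of $\Sigma$ (i.e. $\Sigma=\Sigma\upharpoonright(X-\{p\})\times\{\mathrm{TRUE},\mathrm{FALSE}\}$); $I(\Sigma)$ is the set of irrelevant variables and $R(\Sigma):=X-I(\Sigma)$ the set of relevant (essential) variables. *)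

Inductive form (X : Type) : Type :=
| Var : X -> form X
| Top : form X
| Bot : form X
| Neg : form X -> form X
| And : form X -> form X -> form X
| Or  : form X -> form X -> form X
| Imp : form X -> form X -> form X.

Arguments Var {X} _.
Arguments Top {X}.
Arguments Bot {X}.
Arguments Neg {X} _.
Arguments And {X} _ _.
Arguments Or {X} _ _.
Arguments Imp {X} _ _.

Definition assignment (X : Type) := X -> bool.

Fixpoint sat {X : Type} (v : assignment X) (f : form X) : Prop :=
  match f with
  | Var p => v p = true
  | Top => True
  | Bot => False
  | Neg g => ~ sat v g
  | And g h => sat v g /\ sat v h
  | Or g h => sat v g \/ sat v h
  | Imp g h => sat v g -> sat v h
  end.

Definition models {X : Type} (f : form X) : assignment X -> Prop := fun v => sat v f.

Fixpoint occurs {X : Type} (p : X) (f : form X) : Prop :=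
  match f with
  | Var q => q = p
  | Top | Bot => False
  | Neg g => occurs p g
  | And g h | Or g h | Imp g h => occurs p g \/ occurs p h
  end.

Definition tautology {X : Type} (f : form X) : Prop := forall v : assignment X, sat v f.

Definition subset {X : Type} (S T : assignment X -> Prop) : Prop := forall v, S v -> T v.

Definition irrelevant {X : Type} (Sigma : assignment X -> Prop) (p : X) : Prop :=
  forall v w : assignment X, Sigma v -> (forall q, q <> p -> w q = v q) -> Sigma w.

Definition relevant {X : Type} (Sigma : assignment X -> Prop) (p : X) : Prop :=
  ~ irrelevant Sigma p.

(* Fix a model v of Sigma and a countermodel u of beta. Overwriting v by u on
   the variables of beta, all of them irrelevant for Sigma, yields a model w
   of Sigma, hence of alpha \/ beta. Now w agrees with u on var(beta), so w
   falsifies beta; and w agrees with v on var(alpha), which is disjoint from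
   var(beta), so v satisfies alpha. *)

From Stdlib Require Import Classical ClassicalEpsilon List FunctionalExtensionality.

Fixpoint vars {X : Type} (f : form X) : list X :=
  match f with
  | Var q => q :: nil
  | Top | Bot => nil
  | Neg g => vars g
  | And g h | Or g h | Imp g h => vars g ++ vars h
  end.

Lemma in_vars {X : Type} (f : form X) (q : X) : In q (vars f) <-> occurs q f.
Proof.
  induction f; simpl; try rewrite in_app_iff; intuition.
Qed.

Lemma sat_ext {X : Type} (f : form X) (v w : assignment X) :
  (forall q, occurs q f -> v q = w q) -> (sat v f <-> sat w f).
Proof.
  induction f; simpl; intros Hvw.
  - rewrite (Hvw x eq_refl); reflexivity.
  - reflexivity.
  - reflexivity.
  - rewrite IHf; auto; reflexivity.
  - rewrite IHf1, IHf2; auto; reflexivity.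
  - rewrite IHf1, IHf2; auto; reflexivity.
  - rewrite IHf1, IHf2; auto; reflexivity.
Qed.

Definition patch {X : Type} (P : X -> Prop) (u v : assignment X) : assignment X :=
  fun q => if excluded_middle_informative (P q) then u q else v q.

Lemma patch_in {X : Type} (P : X -> Prop) (u v : assignment X) (q : X) :
  P q -> patch P u v q = u q.
Proof. unfold patch; destruct excluded_middle_informative; tauto. Qed.

Lemma patch_out {X : Type} (P : X -> Prop) (u v : assignment X) (q : X) :
  ~ P q -> patch P u v q = v q.
Proof. unfold patch; destruct excluded_middle_informative; tauto. Qed.

Lemma irrelevant_list {X : Type} (Sigma : assignment X -> Prop) (l : list X) :
  (forall p, In p l -> irrelevant Sigma p) ->
  forall v w, Sigma v -> (forall q, ~ In q l -> w q = v q) -> Sigma w.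
Proof.
  induction l as [|p l IH]; intros Hirr v w Hv Hwv.
  - replace w with v; [exact Hv |].
    apply functional_extensionality; intros q; symmetry; apply Hwv; auto.
  - assert (Hv' : Sigma (patch (fun q => q = p) w v)).
    { apply (Hirr p (or_introl eq_refl) v _ Hv).
      intros q Hq; apply patch_out; exact Hq. }
    apply (IH (fun p' Hp' => Hirr p' (or_intror Hp')) _ w Hv').
    intros q Hq; destruct (classic (q = p)) as [-> | Hqp].
    + rewrite patch_in; reflexivity.
    + rewrite patch_out by exact Hqp; apply Hwv; intros [-> | Hin]; tauto.
Qed.

Theorem fact4p1 (X : Type) (Sigma : assignment X -> Prop) (alpha beta : form X) :
  (forall p, occurs p alpha -> occurs p beta -> False) ->
  (forall p, occurs p beta -> relevant Sigma p -> False) ->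
  ~ tautology beta ->
  subset Sigma (models (Or alpha beta)) ->
  subset Sigma (models alpha).
Proof.
  intros Hdisj Hirr Hnt Hsub v Hv.
  destruct (not_all_ex_not _ _ Hnt) as [u Hu].
  set (B := fun q => In q (vars beta)).
  set (w := patch B u v).
  assert (Hw : Sigma w).
  { apply (irrelevant_list Sigma (vars beta)) with v; [| exact Hv |].
    - intros p Hp; apply NNPP; intros Hrel; apply (Hirr p); [apply in_vars; exact Hp | exact Hrel].
    - intros q Hq; apply patch_out; exact Hq. }
  destruct (Hsub w Hw) as [Ha | Hb].
  - apply (sat_ext alpha w v); [| exact Ha].
    intros q Hq; apply patch_out; intros HB.
    apply (Hdisj q Hq), in_vars; exact HB.
  - exfalso; apply Hu, (sat_ext beta w u); [| exact Hb].
    intros q Hq; apply patch_in, in_vars; exact Hq.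
Qed.
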